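(* Let $\mathcal{X},\mathcal{Y}$ be Polish spaces, let $\mathcal{S}=\{p_1,\ldots,p_{|\mathcal{S}|}\}$ be a finite set of probability measures on $\mathcal{X}$, let $\mathcal{H}=\{h_i\}_{i=1}^M$ be a finite set of real-valued functions on the space $\mathcal{M}_1(\mathcal{X}\times\mathcal{Y})$ of joint distributions, and let $\theta\in\mathbb{R}^M$ be the associated constraint levels. Then a rate $R$ is robust one-shot achievable only if $R\ge\bar{R}(\theta)$.
   Context: A conditional distribution $Q_{Y|X}$ is a stochastic kernel from $\mathcal{X}$ to $\mathcal{Y}$; for $\mu_X\in\mathcal{M}_1(\mathcal{X})$, $\mu_XQ_{Y|X}$ denotes the induced joint law and $I(\mu_X,Q_{Y|X})$ its mutual information. The set $\mathcal{L}(\theta)$ consists of all conditional distributions $Q_{Y|X}$ such that $h_i[\mu_XQ_{Y|X}]\le\theta_i$ for all $\mu_X\in\mathcal{S}$ and all $i\in\{1,\ldots,M\}$. The robust information rate function is $\bar{R}(\theta)=\inf_{Q_{Y|X}\in\mathcal{L}(\theta)}\sup_{\mu_X\in\mathcal{S}}I(\mu_X,Q_{Y|X})$. A rate $R$ is robust one-shot achievable if there exist an encoder $f:\mathcal{X}\times\mathcal{Z}\to\mathbb{N}_0$, a decoder $g:\mathbb{N}_0\times\mathcal{Z}\to\mathcal{Y}$ and a random variable $Z$ valued in a set $\mathcal{Z}$ (common randomness, independent of the source) such that for every $\mu_X\in\mathcal{S}$, with $X\sim\mu_X$, $M=f(X,Z)$ and $Y=g(M,Z)$, one has $H(M\mid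 Z)\le R$ and the induced joint distribution $P_{X,Y}$ satisfies $h_i(P_{X,Y})\le\theta_i$ for all $i$. *)

From mathcomp Require Import all_boot all_order all_algebra.
From mathcomp Require Import all_classical all_reals all_analysis.

Set Implicit Arguments.
Unset Strict Implicit.
Unset Printing Implicit Defensive.
Import Order.TTheory GRing.Theory Num.Theory.

Local Open Scope classical_set_scope.
Local Open Scope ring_scope.

Section polish.
Context {R : realType} {T : Type}.

Definition is_metric (dist : T -> T -> R) : Prop :=
  [/\ (forall x y, 0 <= dist x y),
      (forall x y, dist x y = 0 <-> x = y),
      (forall x y, dist x y = dist y x) &
      (forall x y z, dist x z <= dist x y + dist y z)].

Definition metric_open (dist : T -> T -> R) (U : set T) : Prop :=
  forall x, U x -> exists2 e : R, 0 < e & forall y, dist x y < e -> U y.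

Definition metric_complete (dist : T -> T -> R) : Prop :=
  forall u : nat -> T,
    (forall e : R, 0 < e -> exists N, forall m n, (N <= m)%N -> (N <= n)%N ->
        dist (u m) (u n) < e) ->
    exists x, forall e : R, 0 < e -> exists N, forall n, (N <= n)%N -> dist (u n) x < e.

Definition metric_separable (dist : T -> T -> R) : Prop :=
  exists u : nat -> T, forall x (e : R), 0 < e -> exists n, dist x (u n) < e.
End polish.

Definition polish_measurable (R : realType) d (T : measurableType d) : Prop :=
  exists dist : T -> T -> R,
    [/\ is_metric dist, metric_complete dist, metric_separable dist &
        @measurable d T = <<s [set U | metric_open dist U] >>].

Section info.
Context {R : realType}.

Definition plogpq (p q : R) : R := if p == 0 then 0 else p * ln (p / q).

Definition ent_term (p : R) : R := if p == 0 then 0 else - (p * ln p).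

Definition entropy (p : nat -> R) : \bar R :=
  (\sum_(0 <= m <oo) (ent_term (p m))%:E)%E.

Context {d : measure_display} {T : measurableType d}.
Definition finite_partition (n : nat) (A : 'I_n -> set T) : Prop :=
  [/\ (forall i, measurable (A i)),
      (forall i j, i != j -> A i `&` A j = set0) &
      \bigcup_(i in [set: 'I_n]) A i = [set: T]].
End info.

Section mutual_information.
Context {R : realType} {dx dy : measure_display}
  {X : measurableType dx} {Y : measurableType dy}.

Definition partition_mi (P : set (X * Y) -> \bar R) n m
    (A : 'I_n -> set X) (B : 'I_m -> set Y) : R :=
  \sum_(i < n) \sum_(j < m)
     plogpq (fine (P (A i `*` B j)))
            (fine (P (A i `*` [set: Y])) * fine (P ([set: X] `*` B j))).

(* Mutual information of a joint law (Dobrushin / Gelfand-Yaglom-Perez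
   definition: supremum over finite measurable partitions) *)
Definition mutual_information (P : set (X * Y) -> \bar R) : \bar R :=
  ereal_sup [set r : \bar R | exists n m (A : 'I_n -> set X) (B : 'I_m -> set Y),
     [/\ finite_partition A, finite_partition B & r = (partition_mi P A B)%:E]].

Definition joint_law (mu : probability X R) (Q : R.-pker X ~> Y)
    : set (X * Y) -> \bar R :=
  fun A => (\int[mu]_x Q x [set y | A (x, y)])%E.

Definition I_info (mu : probability X R) (Q : R.-pker X ~> Y) : \bar R :=
  mutual_information (joint_law mu Q).

Context {K M : nat} (S : 'I_K -> probability X R)
  (h : 'I_M -> probability (X * Y)%type R -> R) (theta : 'I_M -> R).

Definition meets_constraints (J : set (X * Y) -> \bar R) : Prop :=
  forall (i : 'I_M) (P : probability (X * Y)%type R),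
    (forall A, measurable A -> P A = J A) -> h i P <= theta i.

Definition L_theta : set (R.-pker X ~> Y) :=
  [set Q | forall k : 'I_K, meets_constraints (joint_law (S k) Q)].

Definition robust_rate : \bar R :=
  ereal_inf [set ereal_sup [set I_info (S k) Q | k in [set: 'I_K]]
            | Q in L_theta].

(* H(M | Z) with M = f(X, Z): the conditional law of M given Z = z is the
   law of f(X, z) (by independence of X and Z) *)
Definition code_cond_entropy {dz} {Zt : measurableType dz}
    (mu : probability X R) (PZ : probability Zt R) (f : X * Zt -> nat) : \bar R :=
  (\int[PZ]_z entropy (fun m => fine (mu [set x | f (x, z) = m])))%E.

Definition code_joint_law {dz} {Zt : measurableType dz}
    (mu : probability X R) (PZ : probability Zt R)
    (f : X * Zt -> nat) (g : nat * Zt -> Y) : set (X * Y) -> \bar R :=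
  fun A => (\int[mu]_x PZ [set z | A (x, g (f (x, z), z))])%E.

Definition robust_one_shot_achievable (Rt : R) : Prop :=
  exists (dz : measure_display) (Zt : measurableType dz) (PZ : probability Zt R)
         (f : X * Zt -> nat) (g : nat * Zt -> Y),
    [/\ measurable_fun [set: X * Zt] f,
        measurable_fun [set: nat * Zt] g &
        forall k : 'I_K,
          (code_cond_entropy (S k) PZ f <= Rt%:E)%E /\
          meets_constraints (code_joint_law (S k) PZ f g)].
End mutual_information.

From HB Require Import structures.
From mathcomp Require Import all_boot all_order all_algebra.
From mathcomp Require Import all_classical all_reals all_analysis.
From mathcomp Require Import measurable_realfun.
From mathcomp Require Import ring lra.

Set Implicit Arguments.
Unset Strict Implicit.
Unset Printing Implicit Defensive.
Import Order.TTheory GRing.Theory Num.Theory.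

Local Open Scope classical_set_scope.
Local Open Scope ring_scope.

(* Given a code (f, g, Z), the kernel sending x to the law of g(f(x, Z), Z)
   reproduces the code's joint law, so it lies in L(theta); it remains to
   bound its mutual information by E_Z H(f(X, z)).  For finite partitions
   (A_i), (B_j) let a_ij(z) and b_j(z) be the probabilities of
   {X in A_i, Y in B_j} and of {Y in B_j} given Z = z.  Then P_ij = E a_ij and
   q_j = E b_j, so that
     P_ij ln (P_ij / (p_i q_j))
       = E [a_ij (ln (P_ij / (p_i q_j)) + 1) - b_j P_ij / q_j].
   By ln t <= t - 1 the integrand is at most - a_ij ln b_j; summing over i
   and j leaves the entropy of the quantised output given Z = z, which is at
   most the entropy H(f(X, z)) of the message it is computed from. *)

Section real_inequalities.
Variable R : realType.
Implicit Types a b p q r t P : R.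

Lemma ln_le_subr1 t : 0 < t -> ln t <= t - 1.
Proof.
by move=> t0; have := @le_ln1Dx R (t - 1); rewrite (addrC 1) subrK; apply; lra.
Qed.

Lemma ent_termE r : ent_term r = - (r * ln r).
Proof. by rewrite /ent_term; case: eqP => [->|//]; rewrite mul0r oppr0. Qed.

Lemma plogpqE P q : plogpq P q = P * ln (P / q).
Proof. by rewrite /plogpq; case: eqP => [->|//]; rewrite mul0r. Qed.

Lemma ent_term_ge0 r : 0 <= r <= 1 -> 0 <= ent_term r.
Proof. by case/andP=> r0 r1; rewrite ent_termE oppr_ge0 mulr_ge0_le0 ?ln_le0. Qed.

Lemma ent_term_ge r b : 0 <= r <= b -> r * - ln b <= ent_term r.
Proof.
case/andP=> r0 rb; rewrite ent_termE -mulrN.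
have [->|r_neq0] := eqVneq r 0; first by rewrite !mul0r.
have r_gt0 : 0 < r by rewrite lt_def r_neq0.
by rewrite ler_wpM2l // lerN2 ler_ln ?posrE // (lt_le_trans r_gt0).
Qed.

(* Integrating [a] and [b] against measures of masses [P] and [q] turns this
   into [plogpq P (p * q)] (lemma [integral_mi_integrand]). *)
Definition mi_integrand P p q a b : R :=
  if P == 0 then 0 else a * (ln (P / (p * q)) + 1) - b * (P / q).

Lemma mi_integrand_le P p q a b :
  0 <= a <= p -> a <= b <= 1 -> 0 <= P <= p -> P <= q ->
  mi_integrand P p q a b <= a * - ln b.
Proof.
case/andP=> a0 ap /andP[ab b1] /andP[P0 Pp] Pq.
rewrite /mi_integrand; case: eqP => [_|/eqP P_neq0].
  by rewrite mulr_ge0 // oppr_ge0 ln_le0.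
have P_gt0 : 0 < P by rewrite lt_def P_neq0.
have p_gt0 : 0 < p by exact: lt_le_trans Pp.
have q_gt0 : 0 < q by exact: lt_le_trans Pq.
have [->|a_neq0] := eqVneq a 0.
  by rewrite !mul0r add0r oppr_le0 mulr_ge0 ?divr_ge0 ?(le_trans a0 ab) ?ltW.
have b_gt0 : 0 < b by rewrite (lt_le_trans _ ab) // lt_def a_neq0.
(* [ln t <= t - 1] at [t = P b / (p q)] *)
set t := P * b / (p * q).
have t_gt0 : 0 < t by rewrite divr_gt0 ?mulr_gt0.
have lnt : ln t = ln (P / (p * q)) + ln b.
  by rewrite -lnM ?posrE ?divr_gt0 ?mulr_gt0 // mulrAC.
have at_le : a * t <= b * (P / q).
  have -> : b * (P / q) = p * t by rewrite /t; field; rewrite !gt_eqF.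
  by rewrite ler_wpM2r // ltW.
have := ler_wpM2l a0 (ln_le_subr1 t_gt0); rewrite lnt; lra.
Qed.

End real_inequalities.

Section integral_lemmas.
Local Open Scope ereal_scope.
Context d (T : measurableType d) (R : realType).
Variable nu : {measure set T -> \bar R}.

(* No measurability is needed: the integral of a nonnegative function is a
   supremum over the simple functions below it. *)
Lemma le_integral_ge0 (f g : T -> \bar R) :
  (forall t, 0 <= g t) -> (forall t, f t <= g t) ->
  \int[nu]_t f t <= \int[nu]_t g t.
Proof.
move=> g0 fg; rewrite integralE -[leRHS]sube0.
apply: leeB; last by apply: integral_ge0 => t _; exact: funeneg_ge0.
have fpos0 t : 0 <= f^\+ t by exact: funepos_ge0.
rewrite (ge0_integralTE nu fpos0) (ge0_integralTE nu g0).
apply: ge_ereal_sup => _ [h hf <-]; apply: ereal_sup_ubound => /=.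
exists h => // t; apply: le_trans (hf t) _.
by rewrite funeposE ge_max fg g0.
Qed.

Lemma integrableMr_EFin (c : R) (e : T -> R) :
  nu.-integrable setT (EFin \o e) ->
  nu.-integrable setT (EFin \o (fun t => e t * c)%R).
Proof.
by move=> ie; apply: (eq_integrable _ (fun t => (e t)%:E * c%:E)) => //;
  exact: integrableZr.
Qed.

Lemma integralMr_EFin (c : R) (e : T -> R) :
  nu.-integrable setT (EFin \o e) ->
  \int[nu]_t (e t * c)%:E = (\int[nu]_t (e t)%:E) * c%:E.
Proof.
by move=> ie; rewrite -integralZr //; under eq_integral do rewrite EFinM.
Qed.

Lemma integrable_mi_integrand (P p q : R) (a b : T -> R) :
  nu.-integrable setT (EFin \o a) -> nu.-integrable setT (EFin \o b) ->
  nu.-integrable setT (fun t => (mi_integrand P p q (a t) (b t))%:E).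
Proof.
move=> ia ib; rewrite /mi_integrand; case: eqP => _; first exact: integrable0.
under eq_fun do rewrite EFinB.
by apply: integrableB => //; exact: integrableMr_EFin.
Qed.

Lemma integral_mi_integrand (P p q : R) (a b : T -> R) :
  nu.-integrable setT (EFin \o a) -> nu.-integrable setT (EFin \o b) ->
  \int[nu]_t (a t)%:E = P%:E -> \int[nu]_t (b t)%:E = q%:E ->
  (0 <= P <= q)%R ->
  \int[nu]_t (mi_integrand P p q (a t) (b t))%:E = (plogpq P (p * q))%:E.
Proof.
move=> ia ib Ia Ib /andP[P0 Pq]; rewrite /mi_integrand plogpqE.
case: eqP => [->|/eqP P_neq0]; first by rewrite integral0 mul0r.
have q_neq0 : q != 0%R by rewrite gt_eqF // (lt_le_trans _ Pq) // lt_def P_neq0.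
under eq_integral do rewrite EFinB.
rewrite integralB_EFin ?integrableMr_EFin // !integralMr_EFin // Ia Ib.
by rewrite -EFinM -EFinB mulrCA divff // mulr1 mulrDr mulr1 addrK.
Qed.

End integral_lemmas.

Lemma finite_partition_trivIset d (T : measurableType d) n (A : 'I_n -> set T) :
  finite_partition A -> trivIset setT A.
Proof. by case=> _ dA _; apply/trivIsetP => i j _ _; exact: dA. Qed.

Lemma sum_partition_mem (V : nmodType) (U : Type) n (B : 'I_n -> set U) u
    (x : V) :
  trivIset setT B -> \bigcup_(j in setT) B j = setT ->
  \sum_(j < n) (if u \in B j then x else 0) = x.
Proof.
move=> tB cB; have [j0 _ Bu] : (\bigcup_(j in setT) B j) u by rewrite cB.
rewrite (bigD1 j0) //= mem_set // big1 ?addr0 // => j /negPf j_neq0.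
case: ifPn => // /set_mem Bj; have := tB j j0 Logic.I Logic.I.
by move=> /(_ (ex_intro _ u (conj Bj Bu)))/eqP; rewrite j_neq0.
Qed.

Section probability_fine.
Context d (T : measurableType d) (R : realType) (mu : probability T R).

Lemma probability_fineK (A : set T) : measurable A -> (fine (mu A))%:E = mu A.
Proof. by move=> mA; rewrite fineK // fin_num_measure. Qed.

Lemma probability_fine_ge0 (A : set T) : 0 <= fine (mu A).
Proof. exact/fine_ge0/measure_ge0. Qed.

Lemma probability_fine_le1 (A : set T) : measurable A -> fine (mu A) <= 1.
Proof. by move=> mA; rewrite -lee_fin probability_fineK ?probability_le1. Qed.

Lemma probability_fine_le (A B : set T) :
  measurable A -> measurable B -> A `<=` B -> fine (mu A) <= fine (mu B).
Proof.
by move=> mA mB AB; rewrite -lee_fin !probability_fineK // le_measure ?inE.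
Qed.

End probability_fine.

Section quantized_entropy.
Local Open Scope ereal_scope.
Context d (T : measurableType d) (U : Type) (R : realType).
Variables (mu : probability T R) (phi : T -> nat) (psi : nat -> U).
Hypothesis mphi : forall k, measurable (phi @^-1` [set k]).

Let decodedE (B : set U) :
  (psi \o phi) @^-1` B = \bigcup_(k in psi @^-1` B) phi @^-1` [set k].
Proof. by apply/seteqP; split => [t Bt|t [k Bk /= ->]] //; exists (phi t). Qed.

Lemma measure_decoded (B : set U) :
  mu ((psi \o phi) @^-1` B) =
  \sum_(k <oo) (if psi k \in B then mu (phi @^-1` [set k]) else 0).
Proof.
rewrite decodedE measure_bigcup ?eseries_mkcond //.
exact: trivIset_preimage1.
Qed.

Lemma measurable_decoded (B : set U) : measurable ((psi \o phi) @^-1` B).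
Proof. by rewrite decodedE; exact: bigcup_measurable. Qed.

Lemma entropy_ge0 : 0 <= entropy (fun k => fine (mu (phi @^-1` [set k]))).
Proof.
apply: nneseries_ge0 => k _ _; rewrite lee_fin ent_term_ge0 //.
by rewrite probability_fine_ge0 probability_fine_le1.
Qed.

Lemma quantized_entropy_le n (B : 'I_n -> set U) :
  trivIset setT B -> \bigcup_(j in setT) B j = setT ->
  \sum_(j < n) (ent_term (fine (mu ((psi \o phi) @^-1` B j))))%:E <=
  entropy (fun k => fine (mu (phi @^-1` [set k]))).
Proof.
move=> tB cB.
have ent_ge0 k : 0 <= (ent_term (fine (mu (phi @^-1` [set k]))))%:E.
  by rewrite lee_fin ent_term_ge0 // probability_fine_ge0 probability_fine_le1.
have ent_le j : (ent_term (fine (mu ((psi \o phi) @^-1` B j))))%:E <=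
    \sum_(k <oo) (if psi k \in B j
                  then (ent_term (fine (mu (phi @^-1` [set k]))))%:E else 0).
  have mBj := measurable_decoded (B j).
  set b := fine (mu _); have bE := probability_fineK mu mBj.
  rewrite ent_termE -mulrN EFinM muleC bE measure_decoded -nneseriesZl;
    last by move=> k _; case: ifP.
  apply: lee_nneseries => [k _ _|k _].
    by case: ifP => // _;
      rewrite mule_ge0 // lee_fin oppr_ge0 ln_le0 ?probability_fine_le1.
  case: ifPn => [/set_mem Bk|_]; last by rewrite mule0.
  rewrite -probability_fineK // -EFinM lee_fin mulrC ent_term_ge //.
  rewrite probability_fine_ge0 probability_fine_le // => t /= ->.
  exact: Bk.
rewrite /entropy; apply: le_trans.
  by apply: lee_sum => j _; exact: ent_le.
rewrite -nneseries_sum; last first.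
  by move=> j k _; case: ifP.
apply: lee_nneseries => [k _ _|k _]; first by apply: sume_ge0 => j _; case: ifP.
by rewrite sum_partition_mem.
Qed.

End quantized_entropy.

Lemma integral_xsectionE d1 d2 (T1 : measurableType d1) (T2 : measurableType d2)
    (R : realType) (m1 : {sigma_finite_measure set T1 -> \bar R})
    (m2 : {sigma_finite_measure set T2 -> \bar R}) (A : set (T1 * T2)) :
  measurable A ->
  (\int[m1]_x m2 (xsection A x) = \int[m2]_y m1 (ysection A y))%E.
Proof.
move=> mA; have := indic_fubini_tonelli m1 m2 mA.
by rewrite indic_fubini_tonelli_FE // indic_fubini_tonelli_GE.
Qed.

Section code.
Local Open Scope ereal_scope.
Context {R : realType} {dx dy dz : measure_display} {X : measurableType dx}
  {Y : measurableType dy} {Zt : measurableType dz}.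
Variables (PZ : probability Zt R) (f : X * Zt -> nat) (g : nat * Zt -> Y).
Hypotheses (mf : measurable_fun [set: X * Zt] f)
  (mg : measurable_fun [set: nat * Zt] g).

Definition code_output (p : X * Zt) : Y := g (f p, p.2).

Lemma measurable_code_output : measurable_fun [set: X * Zt] code_output.
Proof.
apply: measurableT_comp mg _; apply/measurable_fun_pairP; split => //.
exact: measurable_snd.
Qed.

Definition decode_at (x : X) (z : Zt) : Y := code_output (x, z).

HB.instance Definition _ x := isMeasurableFun.Build _ _ _ _ (decode_at x)
  (measurableT_comp measurable_code_output (pair1_measurable x)).

Definition code_kernel_fun (x : X) : {measure set Y -> \bar R} :=
  distribution PZ (decode_at x).

Let measurable_code_kernel_fun U : measurable U ->
  measurable_fun [set: X] (fun x => code_kernel_fun x U).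
Proof.
move=> mU; have mE : measurable (code_output @^-1` U).
  by rewrite -[X in measurable X]setTI; exact: measurable_code_output.
apply: eq_measurable_fun (measurable_fun_xsection PZ mE) => x _ /=.
by congr (PZ _); apply/seteqP; split => z; rewrite /xsection /= inE.
Qed.

HB.instance Definition _ := isKernel.Build _ _ _ _ _ code_kernel_fun
  measurable_code_kernel_fun.

Let code_kernel_fun_setT x : code_kernel_fun x [set: Y] = 1.
Proof. exact: probability_setT. Qed.

HB.instance Definition _ := Kernel_isProbability.Build _ _ _ _ _ code_kernel_fun
  code_kernel_fun_setT.

Definition code_kernel : R.-pker X ~> Y := code_kernel_fun.

Lemma joint_law_code_kernel (mu : probability X R) :
  joint_law mu code_kernel = code_joint_law mu PZ f g.
Proof. by []. Qed.

Variable mu : probability X R.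

Definition cond_law (E : set (X * Y)) (z : Zt) : R :=
  fine (mu [set x | E (x, decode_at x z)]).

Let J := code_joint_law mu PZ f g.

Let graph_preimage (E : set (X * Y)) : set (X * Zt) :=
  [set p | E (p.1, code_output p)].

Let measurable_graph_preimage E : measurable E -> measurable (graph_preimage E).
Proof.
move=> mE; rewrite -[X in measurable X]setTI.
apply: (_ : measurable_fun _ _) => //; apply/measurable_fun_pairP.
by split; [exact: measurable_fst|exact: measurable_code_output].
Qed.

Let cond_slice_ysection E z :
  [set x | E (x, decode_at x z)] = ysection (graph_preimage E) z.
Proof. by apply/seteqP; split => x; rewrite /ysection /= inE. Qed.

Lemma measurable_cond_slice E z :
  measurable E -> measurable [set x | E (x, decode_at x z)].
Proof.
move=> mE; rewrite cond_slice_ysection.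
by apply: measurable_ysection; exact: measurable_graph_preimage.
Qed.

Lemma cond_law_ge0 E z : (0 <= cond_law E z)%R.
Proof. exact: probability_fine_ge0. Qed.

Lemma cond_law_le1 E z : measurable E -> (cond_law E z <= 1)%R.
Proof. by move=> mE; exact/probability_fine_le1/measurable_cond_slice. Qed.

Lemma cond_law_le E1 E2 z : measurable E1 -> measurable E2 -> E1 `<=` E2 ->
  (cond_law E1 z <= cond_law E2 z)%R.
Proof.
move=> mE1 mE2 E12; apply: probability_fine_le; try exact: measurable_cond_slice.
by move=> x /E12.
Qed.

Lemma measurable_cond_law E :
  measurable E -> measurable_fun [set: Zt] (cond_law E).
Proof.
move=> mE; rewrite /cond_law.
under eq_fun do rewrite cond_slice_ysection.
apply: measurableT_comp => //.
apply: measurable_fun_ysection; exact: measurable_graph_preimage.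
Qed.

Lemma integrable_cond_law E : measurable E ->
  PZ.-integrable [set: Zt] (EFin \o cond_law E).
Proof.
move=> mE; apply: measurable_bounded_integrable => //.
- by rewrite ltey_eq fin_num_measure.
- exact: measurable_cond_law.
- exists 1%R; split => // M M1 z _ /=.
  by rewrite ger0_norm ?cond_law_ge0 // (le_trans (cond_law_le1 _ mE)) // ltW.
Qed.

Lemma code_joint_lawE E : measurable E -> J E = \int[PZ]_z (cond_law E z)%:E.
Proof.
move=> mE; have mD := measurable_graph_preimage mE.
transitivity (\int[mu]_x PZ (xsection (graph_preimage E) x)).
  apply: eq_integral => x _; congr (PZ _).
  by apply/seteqP; split => z; rewrite /xsection /= inE.
rewrite integral_xsectionE //; apply: eq_integral => z _.
rewrite /cond_law probability_fineK; last exact: measurable_cond_slice.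
by rewrite cond_slice_ysection.
Qed.

Lemma fine_code_joint_lawE E : measurable E ->
  (fine (J E))%:E = \int[PZ]_z (cond_law E z)%:E.
Proof.
move=> mE; rewrite code_joint_lawE // fineK //.
exact/integrable_fin_num/integrable_cond_law.
Qed.

Lemma cond_law_setXT A z :
  measurable A -> cond_law (A `*` setT) z = fine (mu A).
Proof.
by move=> mA; congr (fine (mu _)); apply/seteqP; split => x /= => [[]|].
Qed.

Lemma code_joint_law_setXT A :
  measurable A -> fine (J (A `*` setT)) = fine (mu A).
Proof.
move=> mA; apply/EFin_inj; rewrite fine_code_joint_lawE; last exact: measurableX.
under eq_integral do rewrite cond_law_setXT //.
by rewrite integral_cst // -[RHS]mule1; congr (_ * _); exact: probability_setT.
Qed.

Lemma fine_code_joint_law_ge0 E : measurable E -> (0 <= fine (J E))%R.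
Proof.
move=> mE; rewrite -lee_fin fine_code_joint_lawE //.
by apply: integral_ge0 => z _; rewrite lee_fin cond_law_ge0.
Qed.

Lemma fine_code_joint_law_le E1 E2 : measurable E1 -> measurable E2 ->
  E1 `<=` E2 -> (fine (J E1) <= fine (J E2))%R.
Proof.
move=> mE1 mE2 E12; rewrite -lee_fin !fine_code_joint_lawE //.
apply: ge0_le_integral => //; try by move=> z _; rewrite lee_fin cond_law_ge0.
- exact/measurable_EFinP/measurable_cond_law.
- exact/measurable_EFinP/measurable_cond_law.
- by move=> z _; rewrite lee_fin cond_law_le.
Qed.

Lemma measurable_message_preimage z k : measurable [set x | f (x, z) = k].
Proof.
have := measurableT_comp mf (pair2_measurable z) measurableT.
by move=> /(_ [set k] _); rewrite setTI; apply.
Qed.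

Section partition.
Variables (n m : nat) (A : 'I_n -> set X) (B : 'I_m -> set Y).
Hypotheses (hA : finite_partition A) (hB : finite_partition B).

Let mA i : measurable (A i). Proof. by case: hA. Qed.
Let mB j : measurable (B j). Proof. by case: hB. Qed.
Let mAB i j : measurable (A i `*` B j). Proof. exact: measurableX. Qed.
Let mTB j : measurable ([set: X] `*` B j). Proof. exact: measurableX. Qed.

Let P i j := fine (J (A i `*` B j)).
Let p i := fine (J (A i `*` [set: Y])).
Let q j := fine (J ([set: X] `*` B j)).
Let a i j := cond_law (A i `*` B j).
Let b j := cond_law ([set: X] `*` B j).
Let G i j z := mi_integrand (P i j) (p i) (q j) (a i j z) (b j z).

Lemma sum_cond_law_le j z : (\sum_i a i j z <= b j z)%R.
Proof.
rewrite -lee_fin -sumEFin.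
have mS i := measurable_cond_slice z (mAB i j).
have -> : \sum_i (a i j z)%:E =
           \sum_i mu [set x | (A i `*` B j) (x, decode_at x z)].
  by apply: eq_bigr => i _; rewrite probability_fineK.
rewrite -measure_bigsetU_ord //; last first.
  move=> i k _ _ [x [[Ai _] [Ak _]]].
  by apply: (finite_partition_trivIset hA) => //; exists x.
rewrite /b /cond_law probability_fineK; last exact: measurable_cond_slice.
apply: le_measure; rewrite ?inE.
- exact: bigsetU_measurable.
- exact: measurable_cond_slice.
- apply: (big_ind (fun S => S `<=` _)) => //.
    by move=> S1 S2 S1sub S2sub x [/S1sub|/S2sub].
  by move=> i _ x /= [_ Bx].
Qed.

Lemma mi_integrand_cond_law_le i j z :
  (G i j z <= a i j z * - ln (b j z))%R.
Proof.
have P_le_p : (P i j <= p i)%R.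
  by apply: fine_code_joint_law_le; [|exact: measurableX|move=> [x y] []].
apply: mi_integrand_le.
- rewrite cond_law_ge0 /p code_joint_law_setXT // -(cond_law_setXT z (mA i)).
  by apply: cond_law_le; [|exact: measurableX|move=> [x y] []].
- by rewrite cond_law_le1 // andbT; apply: cond_law_le => // [[x y] []].
- by rewrite fine_code_joint_law_ge0.
- by apply: fine_code_joint_law_le => // [[x y] []].
Qed.

Lemma sum_mi_integrand_le z :
  (\sum_i \sum_j G i j z)%:E <=
  entropy (fun k => fine (mu [set x | f (x, z) = k])).
Proof.
have [_ _ cB] := hB.
apply: le_trans (quantized_entropy_le mu (fun k => g (k, z))
  (measurable_message_preimage z) (finite_partition_trivIset hB) cB).
rewrite sumEFin lee_fin exchange_big /=; apply: ler_sum => j _.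
have bE : b j z =
    fine (mu (((fun k => g (k, z)) \o (fun x => f (x, z))) @^-1` B j)).
  by congr (fine (mu _)); apply/seteqP; split => x /= => [[]|].
apply: (@le_trans _ _ (\sum_i a i j z * - ln (b j z))%R).
  by apply: ler_sum => i _; exact: mi_integrand_cond_law_le.
rewrite -mulr_suml -bE ent_termE -mulrN ler_wpM2r ?sum_cond_law_le //.
by rewrite oppr_ge0 ln_le0 // cond_law_le1.
Qed.

Lemma partition_mi_code_joint_lawE :
  (partition_mi J A B)%:E = \int[PZ]_z (\sum_i \sum_j G i j z)%:E.
Proof.
have intG i j : PZ.-integrable [set: Zt] (fun z => (G i j z)%:E).
  by apply: integrable_mi_integrand; exact: integrable_cond_law.
under eq_integral => z _.
  rewrite -sumEFin; under eq_bigr do rewrite -sumEFin.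
  over.
rewrite integral_sum //; last first.
  by move=> i; apply: integrable_sum => // j _; exact: intG.
rewrite /partition_mi -sumEFin; apply: eq_bigr => i _.
rewrite integral_sum // -sumEFin; apply: eq_bigr => j _.
rewrite integral_mi_integrand //; try exact: integrable_cond_law.
- exact/esym/fine_code_joint_lawE.
- exact/esym/fine_code_joint_lawE.
- by rewrite fine_code_joint_law_ge0 // fine_code_joint_law_le // => -[x y] [].
Qed.

Lemma partition_mi_code_le :
  (partition_mi J A B)%:E <= code_cond_entropy mu PZ f.
Proof.
rewrite partition_mi_code_joint_lawE; apply: le_integral_ge0 => z.
  exact: entropy_ge0 (measurable_message_preimage z).
exact: sum_mi_integrand_le.
Qed.

End partition.

Lemma I_info_code_kernel_le :
  I_info mu code_kernel <= code_cond_entropy mu PZ f.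
Proof.
apply: ge_ereal_sup => _ [n [m [A [B [hA hB ->]]]]].
rewrite joint_law_code_kernel; exact: partition_mi_code_le.
Qed.

End code.

Unset Implicit Arguments.

Theorem theorem4 (R : realType) (dx dy : measure_display)
  (X : measurableType dx) (Y : measurableType dy)
  (HX : polish_measurable R X) (HY : polish_measurable R Y)
  (K : nat) (S : 'I_K -> probability X R)
  (M : nat) (h : 'I_M -> probability (X * Y)%type R -> R) (theta : 'I_M -> R)
  (Rt : R) :
  robust_one_shot_achievable S h theta Rt ->
  (robust_rate S h theta <= Rt%:E)%E.
Proof.
move=> [dz [Zt [PZ [f [g [mf mg code_ok]]]]]].
pose Q := code_kernel PZ mf mg.
have Q_feasible : L_theta S h theta Q.
  by move=> k; rewrite joint_law_code_kernel; case: (code_ok k).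
apply: le_trans (ereal_inf_lbound _) _; first by exists Q.
apply: ge_ereal_sup => _ [k _ <-].
by apply: le_trans (I_info_code_kernel_le PZ mf mg (S k)) _; case: (code_ok k).
Qed.
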